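(* Let $C$ be a concrete category (each object has an underlying set and morphisms are functions composed as functions) such that (i) set-theoretic finite products and equalizers are also finite products and equalizers in $C$, and (ii) for every $C$-morphism $f:X\to Y$ there are a $C$-object $U$ and a $C$-morphism $u:U\to X\times Y$ with the graph of $f$ equal to the range of $u$. Then $\mathrm{Rel}(C)$, equipped with the cartesian product as monoidal product and the cartesian trace, is a traced symmetric monoidal category having $C$ as a subcategory. If moreover a function between $C$-objects is a $C$-morphism if and only if its graph is the range of some $C$-morphism, then this subcategory consists precisely of those morphisms of $\mathrm{Rel}(C)$ which are set-theoretic functions.
   Context: A $C$-relation between $C$-objects $X$ and $Y$ is a relation $r\subseteq X\times Y$ which equals the range of some $C$-morphism $u:U\to X\times Y$ for some $C$-object $U$. $\mathrm{Rel}(C)$ is the category with the same objects as $C$, whose morphisms from $X$ to $Y$ are the $C$-relations between $X$ and $Y$, composed by relational composition. The cartesian trace of a relation $r\subseteq (X\times Z)\times(Y\times Z)$ is the relation $\mathsf{Tr}(r)\subseteq X\times Y$ with $(x,y)\in\mathsf{Tr}(r)$ iff there is $z\in Z$ with $((x,z),(y,z))\in r$. *)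

From mathcomp Require Import ssreflect ssrfun ssrbool.
Set Implicit Arguments.
Unset Strict Implicit.

(* The data of a (strict-unbiased) traced symmetric monoidal structure on a
   category with objects [ob] and hom-types [hom], whose monoidal product on
   objects is [tn] and monoidal unit is [I].  [comp g f] is "g after f".
   [trace X Y U f] is Tr^U_{X,Y}(f) for f : X (x) U -> Y (x) U. *)
Record tsmc_ops (ob : Type) (hom : ob -> ob -> Type) (tn : ob -> ob -> ob)
    (I : ob) := TsmcOps {
  idm : forall X, hom X X;
  ccomp : forall X Y Z, hom Y Z -> hom X Y -> hom X Z;
  tens : forall X X' Y Y', hom X Y -> hom X' Y' -> hom (tn X X') (tn Y Y');
  assoc : forall X Y Z, hom (tn (tn X Y) Z) (tn X (tn Y Z));
  assoc_inv : forall X Y Z, hom (tn X (tn Y Z)) (tn (tn X Y) Z);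
  lunit : forall X, hom (tn I X) X;
  lunit_inv : forall X, hom X (tn I X);
  runit : forall X, hom (tn X I) X;
  runit_inv : forall X, hom X (tn X I);
  braid : forall X Y, hom (tn X Y) (tn Y X);
  trace : forall X Y U, hom (tn X U) (tn Y U) -> hom X Y
}.

Arguments idm {ob hom tn I} t X.
Arguments ccomp {ob hom tn I} t {X Y Z}.
Arguments tens {ob hom tn I} t {X X' Y Y'}.
Arguments assoc {ob hom tn I} t X Y Z.
Arguments assoc_inv {ob hom tn I} t X Y Z.
Arguments lunit {ob hom tn I} t X.
Arguments lunit_inv {ob hom tn I} t X.
Arguments runit {ob hom tn I} t X.
Arguments runit_inv {ob hom tn I} t X.
Arguments braid {ob hom tn I} t X Y.
Arguments trace {ob hom tn I} t {X Y U}.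

Record is_tsmc (ob : Type) (hom : ob -> ob -> Type) (tn : ob -> ob -> ob)
    (I : ob) (o : tsmc_ops hom tn I) : Prop := IsTsmc {
  comp_assoc : forall W X Y Z (f : hom W X) (g : hom X Y) (h : hom Y Z),
    ccomp o h (ccomp o g f) = ccomp o (ccomp o h g) f;
  comp_id_l : forall X Y (f : hom X Y), ccomp o (idm o Y) f = f;
  comp_id_r : forall X Y (f : hom X Y), ccomp o f (idm o X) = f;
  tens_id : forall X Y, tens o (idm o X) (idm o Y) = idm o (tn X Y);
  tens_comp : forall X X' Y Y' Z Z' (f : hom X Y) (g : hom Y Z)
      (f' : hom X' Y') (g' : hom Y' Z'),
    tens o (ccomp o g f) (ccomp o g' f') = ccomp o (tens o g g') (tens o f f');
  assoc_iso1 : forall X Y Z,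
    ccomp o (assoc_inv o X Y Z) (assoc o X Y Z) = idm o (tn (tn X Y) Z);
  assoc_iso2 : forall X Y Z,
    ccomp o (assoc o X Y Z) (assoc_inv o X Y Z) = idm o (tn X (tn Y Z));
  assoc_nat : forall X X' Y Y' Z Z' (f : hom X X') (g : hom Y Y') (h : hom Z Z'),
    ccomp o (assoc o X' Y' Z') (tens o (tens o f g) h)
    = ccomp o (tens o f (tens o g h)) (assoc o X Y Z);
  lunit_iso1 : forall X, ccomp o (lunit_inv o X) (lunit o X) = idm o (tn I X);
  lunit_iso2 : forall X, ccomp o (lunit o X) (lunit_inv o X) = idm o X;
  lunit_nat : forall X Y (f : hom X Y),
    ccomp o (lunit o Y) (tens o (idm o I) f) = ccomp o f (lunit o X);
  runit_iso1 : forall X, ccomp o (runit_inv o X) (runit o X) = idm o (tn X I);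
  runit_iso2 : forall X, ccomp o (runit o X) (runit_inv o X) = idm o X;
  runit_nat : forall X Y (f : hom X Y),
    ccomp o (runit o Y) (tens o f (idm o I)) = ccomp o f (runit o X);
  pentagon : forall W X Y Z,
    ccomp o (assoc o W X (tn Y Z)) (assoc o (tn W X) Y Z)
    = ccomp o (tens o (idm o W) (assoc o X Y Z))
        (ccomp o (assoc o W (tn X Y) Z) (tens o (assoc o W X Y) (idm o Z)));
  triangle : forall X Y,
    ccomp o (tens o (idm o X) (lunit o Y)) (assoc o X I Y)
    = tens o (runit o X) (idm o Y);
  braid_nat : forall X X' Y Y' (f : hom X X') (g : hom Y Y'),
    ccomp o (braid o X' Y') (tens o f g) = ccomp o (tens o g f) (braid o X Y);
  braid_sym : forall X Y, ccomp o (braid o Y X) (braid o X Y) = idm o (tn X Y);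
  hexagon : forall X Y Z,
    ccomp o (assoc o Y Z X) (ccomp o (braid o X (tn Y Z)) (assoc o X Y Z))
    = ccomp o (tens o (idm o Y) (braid o X Z))
        (ccomp o (assoc o Y X Z) (tens o (braid o X Y) (idm o Z)));
  trace_nat_l : forall X X' Y U (g : hom X' X) (f : hom (tn X U) (tn Y U)),
    trace o (ccomp o f (tens o g (idm o U))) = ccomp o (trace o f) g;
  trace_nat_r : forall X Y Y' U (h : hom Y Y') (f : hom (tn X U) (tn Y U)),
    trace o (ccomp o (tens o h (idm o U)) f) = ccomp o h (trace o f);
  trace_dinat : forall X Y U U' (f : hom (tn X U) (tn Y U')) (g : hom U' U),
    trace o (ccomp o (tens o (idm o Y) g) f)
    = trace o (ccomp o f (tens o (idm o X) g));
  trace_vanish1 : forall X Y (f : hom (tn X I) (tn Y I)),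
    trace o f = ccomp o (runit o Y) (ccomp o f (runit_inv o X));
  trace_vanish2 : forall X Y U V (f : hom (tn X (tn U V)) (tn Y (tn U V))),
    trace o f
    = trace o (trace o (ccomp o (assoc_inv o Y U V) (ccomp o f (assoc o X U V))));
  trace_superpose : forall W Z X Y U (g : hom W Z) (f : hom (tn X U) (tn Y U)),
    trace o (ccomp o (assoc_inv o Z Y U) (ccomp o (tens o g f) (assoc o W X U)))
    = tens o g (trace o f);
  trace_yank : forall U, trace o (braid o U U) = idm o U
}.

Unset Implicit Arguments.
Record concrete_cat := ConcreteCat {
  cobj : Type;
  ccar : cobj -> Type;
  chom : forall X Y : cobj, (ccar X -> ccar Y) -> Prop;
  chom_id : forall X, chom X X id;
  chom_comp : forall X Y Z (f : ccar X -> ccar Y) (g : ccar Y -> ccar Z),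
    chom X Y f -> chom Y Z g -> chom X Z (g \o f)
}.

Arguments ccar {c} _.
Arguments chom {c} X Y _.
Set Implicit Arguments.

Section ConcreteDefs.
Variable C : concrete_cat.

(* (P, e) realizes the set-theoretic product ccar X * ccar Y (e is a bijection
   of underlying sets), and it is a product in C with the set-theoretic
   projections: projections are morphisms and a function into P is a morphism
   iff its components are. *)
Definition set_product_in (X Y P : cobj C) (e : ccar P -> ccar X * ccar Y) :=
  bijective e /\ chom P X (fst \o e) /\ chom P Y (snd \o e) /\
  forall Z (h : ccar Z -> ccar P),
    chom Z X (fst \o e \o h) -> chom Z Y (snd \o e \o h) -> chom Z P h.

Definition set_terminal_in (T : cobj C) :=
  (exists t : ccar T, forall t', t' = t) /\
  forall Z (h : ccar Z -> ccar T), chom Z T h.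

Definition set_equalizers :=
  forall (X Y : cobj C) (f g : ccar X -> ccar Y), chom X Y f -> chom X Y g ->
  exists (E : cobj C) (m : ccar E -> ccar X),
    injective m /\ (forall x, (exists w, m w = x) <-> f x = g x) /\
    chom E X m /\
    forall Z (h : ccar Z -> ccar E), chom Z X (m \o h) -> chom Z E h.

Variable prodO : cobj C -> cobj C -> cobj C.
Variable pe : forall X Y, ccar (prodO X Y) -> ccar X * ccar Y.
Variable unitO : cobj C.

Definition relation (X Y : cobj C) := ccar X -> ccar Y -> Prop.

Definition is_crel (X Y : cobj C) (r : relation X Y) :=
  exists (U : cobj C) (u : ccar U -> ccar (prodO X Y)),
    chom U (prodO X Y) u /\ forall x y, r x y <-> exists w, pe (u w) = (x, y).

Definition CRel (X Y : cobj C) := {r : relation X Y | is_crel r}.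

Definition rgraph X Y (f : ccar X -> ccar Y) : relation X Y := fun x y => f x = y.
Definition rid X : relation X X := fun x y => x = y.
Definition rcomp X Y Z (s : relation Y Z) (r : relation X Y) : relation X Z :=
  fun x z => exists y, r x y /\ s y z.
Definition rtens X X' Y Y' (r : relation X Y) (s : relation X' Y') :
    relation (prodO X X') (prodO Y Y') :=
  fun p q => r (pe p).1 (pe q).1 /\ s (pe p).2 (pe q).2.
Definition rassoc X Y Z : relation (prodO (prodO X Y) Z) (prodO X (prodO Y Z)) :=
  fun p q => (pe (pe p).1).1 = (pe q).1 /\ (pe (pe p).1).2 = (pe (pe q).2).1
             /\ (pe p).2 = (pe (pe q).2).2.
Definition rassoc_inv X Y Z : relation (prodO X (prodO Y Z)) (prodO (prodO X Y) Z) :=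
  fun q p => rassoc p q.
Definition rlunit X : relation (prodO unitO X) X := fun p x => (pe p).2 = x.
Definition rlunit_inv X : relation X (prodO unitO X) := fun x p => rlunit p x.
Definition rrunit X : relation (prodO X unitO) X := fun p x => (pe p).1 = x.
Definition rrunit_inv X : relation X (prodO X unitO) := fun x p => rrunit p x.
Definition rbraid X Y : relation (prodO X Y) (prodO Y X) :=
  fun p q => (pe p).1 = (pe q).2 /\ (pe p).2 = (pe q).1.
Definition rtrace X Y U (r : relation (prodO X U) (prodO Y U)) : relation X Y :=
  fun x y => exists (z : ccar U) p q, pe p = (x, z) /\ pe q = (y, z) /\ r p q.

End ConcreteDefs.

Arguments rid {C} X _ _.
Arguments rassoc {C prodO} pe X Y Z _ _.
Arguments rassoc_inv {C prodO} pe X Y Z _ _.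
Arguments rlunit {C prodO} pe unitO X _ _.
Arguments rlunit_inv {C prodO} pe unitO X _ _.
Arguments rrunit {C prodO} pe unitO X _ _.
Arguments rrunit_inv {C prodO} pe unitO X _ _.
Arguments rbraid {C prodO} pe X Y _ _.
Arguments rgraph {C} X Y f _ _.

From Pilot Require Import Defs.
From mathcomp Require Import ssreflect ssrfun ssrbool.
From Stdlib Require Import ClassicalEpsilon FunctionalExtensionality PropExtensionality ProofIrrelevance Setoid.
Set Implicit Arguments.
Unset Strict Implicit.

(* A C-relation is exactly the image of a span X <- W -> Y of C-morphisms.
   The composite, product and trace of relations presented by spans are
   presented by the subobject of a product of the spans cut out by an
   equalizer (matching the middle, resp. the traced, coordinates), so
   C-relations are closed under all the operations; the structure maps are
   graphs of C-morphisms built from projections and pairing.  Every axiom of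
   a traced symmetric monoidal category is then an identity between
   relations on underlying sets, which holds because [pe] is a bijection.
   Finally a functional relation is the graph of a function, and the extra
   hypothesis says exactly that this function is a C-morphism. *)

Lemma functional_relP (A B : Type) (r : A -> B -> Prop) :
  (forall x, exists! y, r x y) <-> exists f : A -> B, r = fun x y => f x = y.
Proof.
split=> [/choice [f Hf] | [f ->] x]; last by exists (f x).
exists f; apply: functional_extensionality => x; apply: functional_extensionality => y.
apply: propositional_extensionality; split=> [/(proj2 (Hf x)) // | <-].
exact: (proj1 (Hf x)).
Qed.

Lemma rgraph_comp (C : concrete_cat) (X Y Z : cobj C)
    (f : ccar X -> ccar Y) (g : ccar Y -> ccar Z) :
  rgraph X Z (g \o f) = rcomp (rgraph Y Z g) (rgraph X Y f).
Proof.
apply: functional_extensionality => x; apply: functional_extensionality => z.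
apply: propositional_extensionality.
by split=> [<- | [y [<- <-]]] //; exists (f x).
Qed.

Lemma rgraph_inj (C : concrete_cat) (X Y : cobj C) : injective (rgraph X Y).
Proof.
move=> f g e; apply: functional_extensionality => x.
have : rgraph X Y g x (f x) by rewrite -e.
by move=> ->.
Qed.

Section RelC.
Variable C : concrete_cat.
Variable prodO : cobj C -> cobj C -> cobj C.
Variable pe : forall X Y, ccar (prodO X Y) -> ccar X * ccar Y.
Hypothesis Hprod : forall X Y, set_product_in (@pe X Y).
Implicit Types X Y Z U V W : cobj C.

Lemma pe_inverse X Y :
  {ppair : ccar X * ccar Y -> ccar (prodO X Y) | cancel (@pe X Y) ppair /\ cancel ppair (@pe X Y)}.
Proof.
apply: constructive_indefinite_description.
by case: (Hprod X Y) => [[g peK gK] _]; exists g.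
Qed.

Definition ppair X Y := sval (pe_inverse X Y).
Arguments ppair {X Y}.

Lemma ppairK X Y : cancel (@pe X Y) ppair.
Proof. exact: (proj1 (svalP (pe_inverse X Y))). Qed.

Lemma pe_ppair X Y : cancel ppair (@pe X Y).
Proof. exact: (proj2 (svalP (pe_inverse X Y))). Qed.

Lemma ppair_inj X Y (z z' : ccar X * ccar Y) : ppair z = ppair z' <-> z = z'.
Proof. by split=> [e | -> //]; rewrite -[z]pe_ppair e pe_ppair. Qed.

Lemma ex_ppair X Y (P : ccar (prodO X Y) -> Prop) :
  (exists p, P p) <-> exists a b, P (ppair (a, b)).
Proof.
split=> [[p Pp] | [a [b Pab]]]; last by exists (ppair (a, b)).
by exists (pe p).1, (pe p).2; rewrite -surjective_pairing ppairK.
Qed.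

Lemma ppair_ind X Y (P : ccar (prodO X Y) -> Prop) :
  (forall a b, P (ppair (a, b))) -> forall p, P p.
Proof. by move=> Pab p; rewrite -(ppairK p) (surjective_pairing (pe p)). Qed.

Lemma chom_fst X Y : chom (prodO X Y) X (fun p => (pe p).1).
Proof. by case: (Hprod X Y) => _ []. Qed.

Lemma chom_snd X Y : chom (prodO X Y) Y (fun p => (pe p).2).
Proof. by case: (Hprod X Y) => _ [_ []]. Qed.

Lemma chom_ppair Z X Y (a : ccar Z -> ccar X) (b : ccar Z -> ccar Y) :
  chom Z X a -> chom Z Y b -> chom Z (prodO X Y) (fun z => ppair (a z, b z)).
Proof.
case: (Hprod X Y) => _ [_ [_ univ]] ha hb.
apply: univ.
- suff -> : fst \o @pe X Y \o (fun z => ppair (a z, b z)) = a by [].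
  by apply: functional_extensionality => z /=; rewrite pe_ppair.
- suff -> : snd \o @pe X Y \o (fun z => ppair (a z, b z)) = b by [].
  by apply: functional_extensionality => z /=; rewrite pe_ppair.
Qed.

Definition span_image X Y (r : Defs.relation X Y) :=
  exists W (a : ccar W -> ccar X) (b : ccar W -> ccar Y),
    chom W X a /\ chom W Y b /\ forall x y, r x y <-> exists w, a w = x /\ b w = y.

Lemma is_crelP X Y (r : Defs.relation X Y) : is_crel pe r <-> span_image r.
Proof.
split=> [[U [u [hu ru]]] | [W [a [b [ha [hb rab]]]]]].
- exists U, (fun w => (pe (u w)).1), (fun w => (pe (u w)).2).
  split; first exact: chom_comp hu (chom_fst X Y).
  split; first exact: chom_comp hu (chom_snd X Y).
  move=> x y; rewrite ru; split=> -[w uw]; exists w; first by rewrite uw.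
  by case: uw => <- <-; rewrite -surjective_pairing.
- exists W, (fun w => ppair (a w, b w)); split; first exact: chom_ppair.
  move=> x y; rewrite rab; setoid_rewrite pe_ppair.
  by setoid_rewrite pair_equal_spec.
Qed.

Lemma is_crel_fun X Y (f : ccar X -> ccar Y) (r : Defs.relation X Y) :
  chom X Y f -> (forall x y, r x y <-> f x = y) -> is_crel pe r.
Proof.
move=> hf rf; apply/is_crelP; exists X, id, f; split; first exact: chom_id.
split=> // x y.
by rewrite rf; split=> [<- | [w [<- <-]]] //; exists x.
Qed.

Hypothesis Heq : set_equalizers C.

Lemma is_crel_equalizer X Y W V (a : ccar W -> ccar X) (b : ccar W -> ccar Y)
    (p q : ccar W -> ccar V) (r : Defs.relation X Y) :
  chom W X a -> chom W Y b -> chom W V p -> chom W V q ->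
  (forall x y, r x y <-> exists w, p w = q w /\ a w = x /\ b w = y) -> is_crel pe r.
Proof.
move=> ha hb hp hq rab; have [E [m [_ [m_range [hm _]]]]] := Heq hp hq.
apply/is_crelP; exists E, (a \o m), (b \o m).
split; first exact: chom_comp hm ha.
split=> [|x y]; first exact: chom_comp hm hb.
rewrite rab; split=> [[w [/m_range [e <-] xy]] | [e xy]]; first by exists e.
by exists (m e); split=> //; apply/m_range; exists e.
Qed.

Variable unitO : cobj C.
Hypothesis Hunit : set_terminal_in unitO.

Definition unit_pt : ccar unitO := sval (constructive_indefinite_description _ (proj1 Hunit)).

Lemma unit_eq (t : ccar unitO) : t = unit_pt.
Proof. exact: (svalP (constructive_indefinite_description _ (proj1 Hunit))). Qed.

(* Rewrites a relational identity into a first-order statement about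
   components: quantifiers over [prodO X Y] become quantifiers over pairs. *)
Ltac rel_unfold :=
  cbv beta delta [rcomp rtens rassoc rassoc_inv rlunit rlunit_inv rrunit rrunit_inv
    rbraid rtrace rid rgraph];
  repeat setoid_rewrite ex_ppair; cbv beta; repeat setoid_rewrite pe_ppair; cbn [fst snd];
  repeat setoid_rewrite ppair_inj; repeat setoid_rewrite pair_equal_spec.

Ltac destruct_ppairs :=
  repeat match goal with p : ccar (prodO _ _) |- _ => elim/ppair_ind: p => ? ? end.

Ltac rel_solve :=
  repeat (match goal with
  | H : exists _, _ |- _ => destruct H
  | H : _ /\ _ |- _ => destruct H
  | H : ?x = _ |- _ => is_var x; subst x
  | H : _ = ?x |- _ => is_var x; subst x
  | u : ccar unitO |- _ =>
      lazymatch u with unit_pt => fail | _ => let e := fresh in have e := unit_eq u; subst u end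
  | H : (_, _) = (_, _) |- _ => injection H; clear H; intros
  | |- (_, _) = (_, _) => f_equal
  | H : ppair _ = ppair _ |- _ => apply ppair_inj in H
  | |- ppair _ = ppair _ => apply/ppair_inj
  | |- _ <-> _ => split
  | |- _ -> _ => intro
  | |- _ /\ _ => split
  | |- exists _, _ => eexists
  end); try solve [eauto].

Lemma is_crel_rid X : is_crel pe (rid X).
Proof. by apply: (is_crel_fun (chom_id C X)). Qed.

Lemma is_crel_converse X Y (r : Defs.relation X Y) :
  is_crel pe r -> is_crel pe (fun y x => r x y).
Proof.
move=> /is_crelP [W [a [b [ha [hb rab]]]]]; apply/is_crelP; exists W, b, a.
by do 2!split=> //; move=> y x; rewrite rab; split=> -[w [<- <-]]; exists w.
Qed.

Lemma is_crel_rcomp X Y Z (r : Defs.relation X Y) (s : Defs.relation Y Z) :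
  is_crel pe r -> is_crel pe s -> is_crel pe (rcomp s r).
Proof.
move=> /is_crelP [U [a1 [b1 [ha1 [hb1 rab]]]]] /is_crelP [V [a2 [b2 [ha2 [hb2 sab]]]]].
apply: (@is_crel_equalizer _ _ (prodO U V) _ (fun w => a1 (pe w).1) (fun w => b2 (pe w).2)
  (fun w => b1 (pe w).1) (fun w => a2 (pe w).2)).
- exact: chom_comp (chom_fst U V) ha1.
- exact: chom_comp (chom_snd U V) hb2.
- exact: chom_comp (chom_fst U V) hb1.
- exact: chom_comp (chom_snd U V) ha2.
move=> x z; rewrite /rcomp; setoid_rewrite rab; setoid_rewrite sab.
rel_unfold; rel_solve.
Qed.

Lemma is_crel_rtens X X' Y Y' (r : Defs.relation X Y) (s : Defs.relation X' Y') :
  is_crel pe r -> is_crel pe s -> is_crel pe (rtens pe r s).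
Proof.
move=> /is_crelP [U [a1 [b1 [ha1 [hb1 rab]]]]] /is_crelP [V [a2 [b2 [ha2 [hb2 sab]]]]].
have hfst := chom_fst U V; have hsnd := chom_snd U V.
apply: (@is_crel_equalizer _ _ (prodO U V) _
  (fun w => ppair (a1 (pe w).1, a2 (pe w).2)) (fun w => ppair (b1 (pe w).1, b2 (pe w).2))
  (fun w => (pe w).1) (fun w => (pe w).1)) => //.
- by apply: chom_ppair; [exact: chom_comp hfst ha1 | exact: chom_comp hsnd ha2].
- by apply: chom_ppair; [exact: chom_comp hfst hb1 | exact: chom_comp hsnd hb2].
move=> p q; rewrite /rtens; setoid_rewrite rab; setoid_rewrite sab.
destruct_ppairs; rel_unfold; rel_solve.
Qed.

Lemma is_crel_rtrace X Y U (r : Defs.relation (prodO X U) (prodO Y U)) :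
  is_crel pe r -> is_crel pe (rtrace pe r).
Proof.
move=> /is_crelP [W [a [b [ha [hb rab]]]]].
apply: (@is_crel_equalizer _ _ W _ (fun w => (pe (a w)).1) (fun w => (pe (b w)).1)
  (fun w => (pe (a w)).2) (fun w => (pe (b w)).2)).
- exact: chom_comp ha (chom_fst X U).
- exact: chom_comp hb (chom_fst Y U).
- exact: chom_comp ha (chom_snd X U).
- exact: chom_comp hb (chom_snd Y U).
move=> x y; split=> [[z [p [q [px [qy /rab [w [ap bq]]]]]]] | [w [e [<- <-]]]].
- by exists w; subst p q; rewrite px qy.
- exists (pe (a w)).2, (a w), (b w); split; first exact: surjective_pairing.
  by split; [rewrite e -surjective_pairing | apply/rab; exists w].
Qed.

Lemma is_crel_rassoc X Y Z : is_crel pe (rassoc pe X Y Z).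
Proof.
have hfst := chom_fst (prodO X Y) Z; have hsnd := chom_snd (prodO X Y) Z.
apply: (@is_crel_fun _ _ (fun p => ppair ((pe (pe p).1).1, ppair ((pe (pe p).1).2, (pe p).2)))).
- apply: chom_ppair; first exact: chom_comp hfst (chom_fst X Y).
  by apply: chom_ppair; first exact: chom_comp hfst (chom_snd X Y).
- move=> p q; destruct_ppairs; rel_unfold; rel_solve.
Qed.

Lemma is_crel_rbraid X Y : is_crel pe (rbraid pe X Y).
Proof.
apply: (@is_crel_fun _ _ (fun p => ppair ((pe p).2, (pe p).1))).
- exact: chom_ppair (chom_snd X Y) (chom_fst X Y).
- move=> p q; destruct_ppairs; rel_unfold; rel_solve.
Qed.

Lemma is_crel_rlunit X : is_crel pe (rlunit pe unitO X).
Proof. by apply: (is_crel_fun (chom_snd unitO X)). Qed.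

Lemma is_crel_rrunit X : is_crel pe (rrunit pe unitO X).
Proof. by apply: (is_crel_fun (chom_fst X unitO)). Qed.

Definition CRel_ops : tsmc_ops (CRel pe) prodO unitO :=
  @TsmcOps _ _ prodO unitO
   (fun X => exist _ _ (is_crel_rid X))
   (fun X Y Z s r => exist _ _ (is_crel_rcomp (proj2_sig r) (proj2_sig s)))
   (fun X X' Y Y' r s => exist _ _ (is_crel_rtens (proj2_sig r) (proj2_sig s)))
   (fun X Y Z => exist _ _ (is_crel_rassoc X Y Z))
   (fun X Y Z => exist _ _ (is_crel_converse (is_crel_rassoc X Y Z)))
   (fun X => exist _ _ (is_crel_rlunit X))
   (fun X => exist _ _ (is_crel_converse (is_crel_rlunit X)))
   (fun X => exist _ _ (is_crel_rrunit X))
   (fun X => exist _ _ (is_crel_converse (is_crel_rrunit X)))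
   (fun X Y => exist _ _ (is_crel_rbraid X Y))
   (fun X Y U r => exist _ _ (is_crel_rtrace (proj2_sig r))).

Lemma CRel_ext X Y (r s : CRel pe X Y) : (forall x y, sval r x y <-> sval s x y) -> r = s.
Proof.
case: r s => [r hr] [s hs] /= rs; apply: subset_eq_compat.
apply: functional_extensionality => x; apply: functional_extensionality => y.
exact/propositional_extensionality/rs.
Qed.

Lemma CRel_tsmc : is_tsmc CRel_ops.
Proof.
constructor=> *; apply: CRel_ext => * /=; destruct_ppairs; rel_unfold; rel_solve.
(* leftover witnesses range over the singleton [unitO] *)
all: exact: unit_pt.
Qed.

End RelC.

Theorem theorem5p1 (C : concrete_cat)
  (prodO : cobj C -> cobj C -> cobj C)
  (pe : forall X Y, ccar (prodO X Y) -> ccar X * ccar Y)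
  (unitO : cobj C)
  (Hprod : forall X Y, set_product_in (pe X Y))
  (Hunit : set_terminal_in unitO)
  (Heq : set_equalizers C)
  (Hgraph : forall X Y (f : ccar X -> ccar Y),
     chom X Y f -> is_crel pe (rgraph X Y f)) :
  (exists o : tsmc_ops (CRel pe) prodO unitO,
     is_tsmc o /\
     (forall X, sval (idm o X) = rid X) /\
     (forall X Y Z (s : CRel pe Y Z) (r : CRel pe X Y),
        sval (ccomp o s r) = rcomp (sval s) (sval r)) /\
     (forall X X' Y Y' (r : CRel pe X Y) (s : CRel pe X' Y'),
        sval (tens o r s) = rtens pe (sval r) (sval s)) /\
     (forall X Y Z, sval (assoc o X Y Z) = rassoc pe X Y Z) /\
     (forall X Y Z, sval (assoc_inv o X Y Z) = rassoc_inv pe X Y Z) /\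
     (forall X, sval (lunit o X) = rlunit pe unitO X) /\
     (forall X, sval (lunit_inv o X) = rlunit_inv pe unitO X) /\
     (forall X, sval (runit o X) = rrunit pe unitO X) /\
     (forall X, sval (runit_inv o X) = rrunit_inv pe unitO X) /\
     (forall X Y, sval (braid o X Y) = rbraid pe X Y) /\
     (forall X Y U (r : CRel pe (prodO X U) (prodO Y U)),
        sval (trace o r) = rtrace pe (sval r))) /\
  (forall X Y (f : ccar X -> ccar Y), chom X Y f -> is_crel pe (rgraph X Y f)) /\
  (forall X : cobj C, rgraph X X id = @rid C X) /\
  (forall X Y Z : cobj C, forall (f : ccar X -> ccar Y) (g : ccar Y -> ccar Z),
     rgraph X Z (g \o f) = rcomp (rgraph Y Z g) (rgraph X Y f)) /\
  (forall X Y : cobj C, forall (f g : ccar X -> ccar Y), rgraph X Y f = rgraph X Y g -> f = g) /\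
  ((forall X Y (f : ccar X -> ccar Y), chom X Y f <-> is_crel pe (rgraph X Y f)) ->
   forall X Y (r : CRel pe X Y),
     (forall x, exists! y, sval r x y) <->
     (exists f : ccar X -> ccar Y, chom X Y f /\ sval r = rgraph X Y f)).
Proof.
split.
  exists (CRel_ops Hprod Heq unitO).
  by split; [exact: (CRel_tsmc Hprod Heq Hunit) | do 10!split].
split; first exact: Hgraph.
split; first done.
split; first exact: rgraph_comp.
split; first exact: rgraph_inj.
move=> graph_hom X Y [r hr] /=; rewrite functional_relP.
split=> [[f rf] | [f [_ ->]]]; last by exists f.
by exists f; split=> //; apply/graph_hom; rewrite /rgraph -rf.
Qed.
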